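(* Let $\kappa$ be a cardinal, let $\mathcal{C},\mathcal{D}$ be categories that have products indexed by sets of cardinality $\kappa$, and let $F:\mathcal{C}\to\mathcal{D}$ be a functor. Assume that $|\mathcal{D}(F(c'),F(c))|\leq\kappa$ for any two objects $c',c$ of $\mathcal{C}$. Then: (1) for any two parallel morphisms $f,g:c'\to c$ in $\mathcal{C}$ we have $F(f)=F(g)$; (2) if $\mathcal{C}$ is strongly connected, then $F$ is isomorphic to a constant functor.
   Context: A category is strongly connected if for any two objects $c,c'$ the hom-set $\mathcal{C}(c,c')$ is non-empty. *)

Set Implicit Arguments.
Unset Strict Implicit.

Record Category := {
  Obj : Type;
  Hom : Obj -> Obj -> Type;
  idm : forall a, Hom a a;
  comp : forall a b c, Hom b c -> Hom a b -> Hom a c;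
  comp_id_l : forall a b (f : Hom a b), comp (idm b) f = f;
  comp_id_r : forall a b (f : Hom a b), comp f (idm a) = f;
  comp_assoc : forall a b c d (f : Hom c d) (g : Hom b c) (h : Hom a b),
      comp f (comp g h) = comp (comp f g) h
}.

Arguments Hom : clear implicits.
Arguments idm {C} a : rename.
Arguments comp {C a b c} _ _ : rename.

Record Functor (C D : Category) := {
  fobj : Obj C -> Obj D;
  fmap : forall a b, Hom C a b -> Hom D (fobj a) (fobj b);
  fmap_id : forall a, fmap (idm a) = idm (fobj a);
  fmap_comp : forall a b c (f : Hom C b c) (g : Hom C a b),
      fmap (comp f g) = comp (fmap f) (fmap g)
}.

Arguments fobj {C D} F _ : rename.
Arguments fmap {C D} F {a b} _ : rename.

Definition ConstFunctor (C D : Category) (d : Obj D) : Functor C D.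
Proof.
  refine {| fobj := fun _ => d; fmap := fun _ _ _ => idm d |}.
  - reflexivity.
  - intros. symmetry. apply comp_id_l.
Defined.

Definition IsIso (C : Category) (a b : Obj C) (f : Hom C a b) : Prop :=
  exists g : Hom C b a, comp g f = idm a /\ comp f g = idm b.

Definition NatIso (C D : Category) (F G : Functor C D) : Prop :=
  exists alpha : forall c : Obj C, Hom D (fobj F c) (fobj G c),
    (forall c, IsIso (alpha c)) /\
    (forall a b (f : Hom C a b), comp (alpha b) (fmap F f) = comp (fmap G f) (alpha a)).

Definition IsoToConstantFunctor (C D : Category) (F : Functor C D) : Prop :=
  exists d : Obj D, NatIso F (ConstFunctor C d).

Definition StronglyConnected (C : Category) : Prop :=
  forall c c' : Obj C, inhabited (Hom C c c').

Definition IsProduct {C : Category} {I : Type} (X : I -> Obj C)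
    (P : Obj C) (pr : forall i, Hom C P (X i)) : Prop :=
  forall (Q : Obj C) (q : forall i, Hom C Q (X i)),
    exists! u : Hom C Q P, forall i, comp (pr i) u = q i.

Arguments IsProduct {C I} X P pr.

Definition HasProductsIndexedBy (C : Category) (I : Type) : Prop :=
  forall X : I -> Obj C,
    exists (P : Obj C) (pr : forall i, Hom C P (X i)), IsProduct X P pr.

(* Cardinals are represented by types: a cardinal kappa is the cardinality
   of a type K. *)
Definition Equipotent (A B : Type) : Prop :=
  exists (f : A -> B) (g : B -> A),
    (forall a, g (f a) = a) /\ (forall b, f (g b) = b).

Definition CardLe (A K : Type) : Prop :=
  exists f : A -> K, forall x y, f x = f y -> x = y.

Definition HasKappaProducts (C : Category) (K : Type) : Prop :=
  forall I : Type, Equipotent I K -> HasProductsIndexedBy C I.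

(* If F f <> F g for some f, g : c' -> c, let P be the K-fold power of c.
   Each S : K -> bool determines the morphism c' -> P whose i-th component is
   f or g according to S i; composing its image under F with F of the
   projections recovers S, so S |-> F(u_S) injects 2^K into D(F c', F P),
   contradicting Cantor's theorem.  Hence F identifies parallel morphisms, and
   in a strongly connected C the images of arbitrary morphisms c -> c0 and
   c0 -> c are mutually inverse, giving a natural isomorphism from F to the
   constant functor at F c0. *)
From Stdlib Require Import Classical ClassicalEpsilon FunctionalExtensionality.

Set Implicit Arguments.

Lemma no_surjection_onto_predicates (K : Type) (s : K -> (K -> bool)) :
  ~ (forall S : K -> bool, exists k, s k = S).
Proof.
  intros Hsurj.
  destruct (Hsurj (fun k => negb (s k k))) as [k Hk].
  assert (Hkk : s k k = negb (s k k)) by exact (f_equal (fun S => S k) Hk).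
  destruct (s k k); discriminate.
Qed.

Lemma not_CardLe_predicates (K : Type) : ~ CardLe (K -> bool) K.
Proof.
  intros [h Hinj].
  set (retract k := epsilon (inhabits (fun _ : K => true))
                            (fun S : K -> bool => h S = k)).
  apply (@no_surjection_onto_predicates K retract).
  intros S. exists (h S). apply Hinj.
  exact (epsilon_spec _ (fun T => h T = h S) (ex_intro _ S eq_refl)).
Qed.

Lemma Equipotent_refl (A : Type) : Equipotent A A.
Proof. exists (fun a => a), (fun a => a). split; reflexivity. Qed.

Section PowerSeparation.

Variables (C D : Category) (F : Functor C D) (K : Type).
Variables (c P : Obj C) (pr : K -> Hom C P c).
Hypothesis P_power : IsProduct (fun _ : K => c) P pr.

Lemma power_mediator {c' : Obj C} (q : K -> Hom C c' c) :
  { u : Hom C c' P | forall i, comp (pr i) u = q i }.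
Proof.
  apply constructive_indefinite_description.
  destruct (P_power c' q) as [u [Hu _]]. exists u. exact Hu.
Qed.

Lemma fmap_parallel_eq_of_power {c' : Obj C} (f g : Hom C c' c) :
  CardLe (Hom D (fobj F c') (fobj F P)) K -> fmap F f = fmap F g.
Proof.
  intros [inj Hinj].
  apply NNPP. intros Hneq.
  set (u (S : K -> bool) :=
         proj1_sig (power_mediator (fun i : K => if S i then f else g))).
  apply (@not_CardLe_predicates K).
  exists (fun S => inj (fmap F (u S))).
  intros S T HST. apply Hinj in HST.
  apply functional_extensionality. intros i.
  assert (Hi : fmap F (comp (pr i) (u S)) = fmap F (comp (pr i) (u T)))
    by (rewrite !fmap_comp, HST; reflexivity).
  unfold u in Hi. rewrite !(proj2_sig (power_mediator _)) in Hi.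
  destruct (S i), (T i); congruence.
Qed.

End PowerSeparation.

Lemma iso_to_constant_of_fmap_parallel_eq (C D : Category) (F : Functor C D) :
  (forall (c' c : Obj C) (f g : Hom C c' c), fmap F f = fmap F g) ->
  StronglyConnected C -> inhabited (Obj C) -> IsoToConstantFunctor F.
Proof.
  intros Hcollapse SC [c0].
  set (pick a b := epsilon (SC a b) (fun _ => True)).
  exists (fobj F c0), (fun c => fmap F (pick c c0)). split.
  - intros c. exists (fmap F (pick c0 c)). simpl.
    split; rewrite <- fmap_comp, <- fmap_id; apply Hcollapse.
  - intros a b f. simpl. rewrite comp_id_l, <- fmap_comp. apply Hcollapse.
Qed.

Theorem proposition2p2 (K : Type) (C D : Category) (F : Functor C D) :
  HasKappaProducts C K ->
  HasKappaProducts D K ->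
  (forall c' c : Obj C, CardLe (Hom D (fobj F c') (fobj F c)) K) ->
  (forall (c' c : Obj C) (f g : Hom C c' c), fmap F f = fmap F g) /\
  (StronglyConnected C -> inhabited (Obj C) -> IsoToConstantFunctor F).
Proof.
  intros C_powers _ hom_small.
  assert (Hcollapse : forall (c' c : Obj C) (f g : Hom C c' c),
             fmap F f = fmap F g).
  { intros c' c f g.
    destruct (C_powers K (Equipotent_refl K) (fun _ => c)) as [P [pr P_power]].
    exact (fmap_parallel_eq_of_power F P_power f g (hom_small c' P)). }
  split.
  - exact Hcollapse.
  - exact (iso_to_constant_of_fmap_parallel_eq F Hcollapse).
Qed.
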